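(* Let $(h_n)_{n\ge1}$ be a sequence taking values in a finite set of maps of the form $h(z)=az+b$ with $a>0$ and $\operatorname{Re}(b)>0$; write $h_n(z)=a_nz+b_n$, and let $H_n=h_1\cdots h_n$. Then $(H_n)$ is of limit-disc type if and only if $\sum_{n=1}^\infty a_1a_2\cdots a_n<+\infty$. Furthermore, if $(H_n)$ is of limit-disc type and converges ideally to a point $q$, then $q\neq\infty$.
   Context: $\mathbb{K}$ is the open right half-plane $\{\operatorname{Re}z>0\}$; each $h_n$ maps $\mathbb{K}$ strictly inside itself. $(H_n)$ is of limit-disc type if $\bigcap_n H_n(\overline{\mathbb{K}})$ (closures in $\overline{\mathbb{C}}$) is a disc (of positive chordal radius), rather than a single point. Möbius maps act on $\mathbb{H}^3=\{(x,y,t):t>0\}$ via Poincaré extension, $j=(0,0,1)$; $(H_n)$ converges ideally to $q\in\overline{\mathbb{C}}$ if $H_n(j)\to q$ in the chordal metric. *)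

From Stdlib Require Import Reals Lra List.
Open Scope R_scope.

Definition C := (R * R)%type.
Definition Re (z : C) : R := fst z.
Definition Im (z : C) : R := snd z.

(* Extended complex plane C ∪ {∞}: [None] is ∞. *)
Definition Chat := option C.

(* Points of R^3 = C × R, written (z, t); H^3 = {t > 0}. *)
Definition R3 := (C * R)%type.
Definition R3hat := option R3.

Definition sqn3 (x : R3) : R :=
  let '((a, b), t) := x in a * a + b * b + t * t.
Definition sub3 (x y : R3) : R3 :=
  let '((a, b), t) := x in let '((a', b'), t') := y in ((a - a', b - b'), t - t').

Definition chord3 (x y : R3hat) : R :=
  match x, y with
  | Some x, Some y =>
      2 * sqrt (sqn3 (sub3 x y)) / sqrt ((1 + sqn3 x) * (1 + sqn3 y))
  | Some x, None | None, Some x => 2 / sqrt (1 + sqn3 x)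
  | None, None => 0
  end.

(* Ĉ is the plane t = 0 in R^3 ∪ {∞}. *)
Definition embed (w : Chat) : R3hat :=
  match w with Some z => Some (z, 0) | None => None end.

Definition chord (w1 w2 : Chat) : R := chord3 (embed w1) (embed w2).

Definition inK (w : Chat) : Prop :=
  match w with Some z => 0 < Re z | None => False end.
Definition inKbar (w : Chat) : Prop :=
  forall eps, 0 < eps -> exists v, inK v /\ chord w v < eps.

(* An affine map h(z) = a z + b is given by its parameters (a, b), a real. *)
Definition affmap := (R * C)%type.
Definition admissible (p : affmap) : Prop := 0 < fst p /\ 0 < Re (snd p).

Definition act (p : affmap) (w : Chat) : Chat :=
  match w with
  | Some (x, y) => let '(a, (b1, b2)) := p in Some (a * x + b1, a * y + b2)
  | None => None
  end.

(* Poincaré extension of h(z) = a z + b (a > 0) to H^3: (z, t) ↦ (a z + b, a t). *)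
Definition pext (p : affmap) (P : R3) : R3 :=
  let '((x, y), t) := P in let '(a, (b1, b2)) := p in ((a * x + b1, a * y + b2), a * t).

(* H_n = h_1 ∘ ... ∘ h_n  (h indexed from 1; H_0 = id). *)
Fixpoint Hn (h : nat -> affmap) (n : nat) (w : Chat) : Chat :=
  match n with
  | O => w
  | S m => Hn h m (act (h (S m)) w)
  end.

Fixpoint Hn3 (h : nat -> affmap) (n : nat) (P : R3) : R3 :=
  match n with
  | O => P
  | S m => Hn3 h m (pext (h (S m)) P)
  end.

Definition jpt : R3 := ((0, 0), 1).

Definition limit_set (h : nat -> affmap) (w : Chat) : Prop :=
  forall n, (1 <= n)%nat -> exists v, inKbar v /\ Hn h n v = w.

Definition limit_disc_type (h : nat -> affmap) : Prop :=
  exists (c : Chat) (r : R), 0 < r /\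
    forall w, limit_set h w <-> chord w c <= r.

Definition converges_ideally (h : nat -> affmap) (q : Chat) : Prop :=
  forall eps, 0 < eps -> exists N, forall n, (N <= n)%nat ->
    chord3 (Some (Hn3 h n jpt)) (embed q) < eps.

Fixpoint prodA (h : nat -> affmap) (n : nat) : R :=
  match n with
  | O => 1
  | S m => prodA h m * fst (h (S m))
  end.

Fixpoint partial_sum (h : nat -> affmap) (N : nat) : R :=
  match N with
  | O => 0
  | S m => partial_sum h m + prodA h (S m)
  end.

(* Each h_n is affine, so H_n(z) = A_n z + B_n with A_n = a_1 ... a_n and
   B_n = sum_{k<n} A_k b_{k+1}.  Hence H_n(K̄) is the closed half-plane
   {Re z >= Re B_n} together with oo, and the limit set is the intersection of
   these nested half-planes.  Since the Re b's of the finitely many maps lie in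
   some [m, M] with m > 0, Re B_n is increasing and comparable to
   sum_{k<n} A_k.  If the series diverges, the limit set is {oo}, which is not a
   disc of positive radius; if it converges, the limit set is the half-plane
   {Re z >= sup Re B_n} with oo, which is a chordal disc.  In the latter case
   H_n(j) = (B_n, A_n) stays bounded, so it cannot tend to oo. *)

From Stdlib Require Import Reals List Lra Lia.
Open Scope R_scope.

Definition norm2 (z : C) : R := Re z * Re z + Im z * Im z.

Definition dist2 (z v : C) : R :=
  (Re z - Re v) * (Re z - Re v) + (Im z - Im v) * (Im z - Im v).

Definition closed_halfplane (s : R) (w : Chat) : Prop :=
  match w with Some z => s <= Re z | None => True end.

Lemma norm2_ge0 (z : C) : 0 <= norm2 z.
Proof.
  unfold norm2; pose proof (Rle_0_sqr (Re z)); pose proof (Rle_0_sqr (Im z)).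
  unfold Rsqr in *; lra.
Qed.

Lemma dist2_ge0 (z v : C) : 0 <= dist2 z v.
Proof.
  unfold dist2; pose proof (Rle_0_sqr (Re z - Re v)); pose proof (Rle_0_sqr (Im z - Im v)).
  unfold Rsqr in *; lra.
Qed.

Lemma norm2_le_dist2 (z v : C) : norm2 v <= 2 * norm2 z + 2 * dist2 z v.
Proof.
  unfold norm2, dist2.
  pose proof (Rle_0_sqr (2 * Re z - Re v)); pose proof (Rle_0_sqr (2 * Im z - Im v)).
  unfold Rsqr in *; nra.
Qed.

Lemma chord_finite (z v : C) :
  chord (Some z) (Some v) =
  2 * sqrt (dist2 z v) / sqrt ((1 + norm2 z) * (1 + norm2 v)).
Proof.
  destruct z as [x y], v as [u w].
  unfold chord, chord3, embed, sqn3, sub3, dist2, norm2, Re, Im; simpl.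
  f_equal; [f_equal; f_equal | f_equal; f_equal; f_equal]; ring.
Qed.

Lemma chord_finite_inf (z : C) : chord (Some z) None = 2 / sqrt (1 + norm2 z).
Proof.
  destruct z as [x y]; unfold chord, chord3, embed, sqn3, norm2, Re, Im; simpl.
  do 3 f_equal; ring.
Qed.

Lemma chord_inf_finite (z : C) : chord None (Some z) = chord (Some z) None.
Proof. reflexivity. Qed.

Lemma chord_le_dist (z v : C) : chord (Some z) (Some v) <= 2 * sqrt (dist2 z v).
Proof.
  rewrite chord_finite.
  pose proof (norm2_ge0 z); pose proof (norm2_ge0 v); pose proof (sqrt_pos (dist2 z v)).
  assert (1 <= sqrt ((1 + norm2 z) * (1 + norm2 v))).
  { rewrite <- sqrt_1 at 1; apply sqrt_le_1_alt; nra. }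
  apply (Rmult_le_reg_r (sqrt ((1 + norm2 z) * (1 + norm2 v)))); [lra|].
  unfold Rdiv; rewrite Rmult_assoc, Rinv_l by lra; nra.
Qed.

Lemma chord_inf_lt (r : R) : 0 < r -> chord None (Some (2 / r, 0)) < r.
Proof.
  intro Hr; rewrite chord_inf_finite, chord_finite_inf; unfold norm2, Re, Im; simpl.
  set (x := 2 / r).
  assert (Hx : r * x = 2) by (unfold x; field; lra).
  assert (Hsq : x < sqrt (1 + (x * x + 0 * 0))).
  { rewrite <- (sqrt_square x) at 1 by (unfold x; apply Rlt_le, Rdiv_lt_0_compat; lra).
    apply sqrt_lt_1_alt; nra. }
  apply (Rmult_lt_reg_r (sqrt (1 + (x * x + 0 * 0)))); [nra|].
  unfold Rdiv; rewrite Rmult_assoc, Rinv_l by nra; nra.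
Qed.

Lemma chord_separated (z : C) (d : R) : 0 < d ->
  exists eps, 0 < eps /\
    forall v, d * d <= dist2 z v -> eps <= chord (Some z) (Some v).
Proof.
  intro Hd. set (P := 1 + norm2 z).
  assert (HP : 1 <= P) by (pose proof (norm2_ge0 z); unfold P; lra).
  set (k := d * d / (2 * P * (1 + d * d))).
  assert (Hk : 0 < k) by (unfold k; apply Rdiv_lt_0_compat; nra).
  assert (Hk2 : k * (2 * P * (1 + d * d)) = d * d) by (unfold k; field; nra).
  exists (2 * sqrt k / sqrt P); split.
  { apply Rdiv_lt_0_compat; [pose proof (sqrt_lt_R0 k Hk) | apply sqrt_lt_R0]; lra. }
  intros v Hv. rewrite chord_finite; fold P.
  set (Q := dist2 z v); set (D := 1 + norm2 v).
  assert (HD : 1 <= D <= 2 * P * (1 + Q)).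
  { pose proof (norm2_ge0 v); pose proof (norm2_le_dist2 z v); unfold D, P, Q in *; nra. }
  (* [k] is chosen so that [2 P (1 + Q) k = d^2 (1 + Q) / (1 + d^2) <= Q]. *)
  assert (HkD : k * D <= Q).
  { assert (E : k * (2 * P * (1 + Q)) * (1 + d * d) = d * d * (1 + Q))
      by (transitivity (k * (2 * P * (1 + d * d)) * (1 + Q)); [ring | rewrite Hk2; ring]).
    assert (k * (2 * P * (1 + Q)) <= Q).
    { apply (Rmult_le_reg_r (1 + d * d)); [nra | rewrite E; unfold Q; lra]. }
    pose proof (Rmult_le_compat_l k _ _ (Rlt_le _ _ Hk) (proj2 HD)); lra. }
  assert (Hsq : sqrt k * sqrt D <= sqrt Q).
  { rewrite <- sqrt_mult by lra; apply sqrt_le_1_alt; lra. }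
  pose proof (sqrt_lt_R0 P ltac:(lra)); pose proof (sqrt_lt_R0 D ltac:(lra)).
  rewrite sqrt_mult by lra.
  replace (2 * sqrt k / sqrt P) with (2 * (sqrt k * sqrt D) / (sqrt P * sqrt D))
    by (field; lra).
  unfold Rdiv; apply Rmult_le_compat_r; [left; apply Rinv_0_lt_compat; nra | lra].
Qed.

Lemma inKbar_iff (w : Chat) : inKbar w <-> closed_halfplane 0 w.
Proof.
  destruct w as [z|]; simpl.
  - split.
    + intro Hz. apply Rnot_lt_le; intro Hneg.
      destruct (chord_separated z (- Re z) ltac:(lra)) as (eps & Heps & Hsep).
      destruct (Hz eps Heps) as ([v|] & Hv & Hc); [simpl in Hv | contradiction].
      assert (eps <= chord (Some z) (Some v)); [apply Hsep | lra].
      unfold dist2; pose proof (Rle_0_sqr (Im z - Im v)); unfold Rsqr in *; nra.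
    + intros Hz eps Heps. exists (Some (Re z + eps / 4, Im z)); split; [simpl; lra|].
      eapply Rle_lt_trans; [apply chord_le_dist|].
      replace (dist2 z (Re z + eps / 4, Im z)) with ((eps / 4) * (eps / 4))
        by (unfold dist2, Re, Im; simpl; ring).
      rewrite sqrt_square by lra; lra.
  - split; [trivial|]. intros _ eps Heps.
    exists (Some (2 / eps, 0)); split; [simpl; apply Rdiv_lt_0_compat; lra|].
    exact (chord_inf_lt eps Heps).
Qed.

Lemma chord_le_chord_inf_iff (z c : C) :
  chord (Some z) (Some c) <= chord (Some c) None <-> dist2 z c <= 1 + norm2 z.
Proof.
  rewrite chord_finite, chord_finite_inf.
  set (P := 1 + norm2 z); set (D := 1 + norm2 c); set (Q := dist2 z c).
  assert (HP : 0 < P) by (pose proof (norm2_ge0 z); unfold P; lra).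
  assert (HD : 0 < D) by (pose proof (norm2_ge0 c); unfold D; lra).
  assert (HQ : 0 <= Q) by apply dist2_ge0.
  pose proof (sqrt_lt_R0 P HP); pose proof (sqrt_lt_R0 D HD).
  rewrite sqrt_mult by lra.
  assert (EQ : 2 * sqrt Q / (sqrt P * sqrt D) * (sqrt P * sqrt D) = 2 * sqrt Q)
    by (field; lra).
  assert (EP : 2 / sqrt D * (sqrt P * sqrt D) = 2 * sqrt P) by (field; lra).
  split; intro Hle.
  - apply Rmult_le_compat_r with (r := sqrt P * sqrt D) in Hle; [|nra].
    rewrite EQ, EP in Hle. apply sqrt_le_0; lra.
  - apply (Rmult_le_reg_r (sqrt P * sqrt D)); [nra|].
    rewrite EQ, EP. apply sqrt_le_1_alt in Hle. lra.
Qed.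

Lemma closed_halfplane_disc (s : R) :
  exists c r, 0 < r /\ forall w, closed_halfplane s w <-> chord w c <= r.
Proof.
  (* [c0] is the positive root of [c^2 - 2 s c - 1 = 0], so that
     [|z - c0|^2 <= 1 + |z|^2] reduces to [s <= Re z]. *)
  set (c0 := s + sqrt (s * s + 1)).
  assert (Ht : sqrt (s * s + 1) * sqrt (s * s + 1) = s * s + 1)
    by (apply sqrt_sqrt; nra).
  assert (Hc0 : 0 < c0).
  { pose proof (sqrt_pos (s * s + 1)); unfold c0; nra. }
  assert (Hroot : c0 * c0 - 2 * s * c0 - 1 = 0) by (unfold c0; nra).
  exists (Some (c0, 0)), (chord (Some (c0, 0)) None); split.
  { rewrite chord_finite_inf; apply Rdiv_lt_0_compat; [lra|].
    apply sqrt_lt_R0; pose proof (norm2_ge0 (c0, 0)); lra. }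
  intros [z|]; simpl.
  - rewrite chord_le_chord_inf_iff.
    replace (dist2 z (c0, 0)) with (1 + norm2 z - 2 * c0 * (Re z - s))
      by (unfold dist2, norm2, Re, Im; simpl; lra).
    split; intro; nra.
  - rewrite chord_inf_finite; split; intros _; [right; reflexivity | exact I].
Qed.

Lemma disc_has_finite_point (c : Chat) (r : R) : 0 < r -> exists z, chord (Some z) c <= r.
Proof.
  intro Hr; destruct c as [c|].
  - exists c; rewrite chord_finite.
    replace (dist2 c c) with 0 by (unfold dist2; ring).
    rewrite sqrt_0; unfold Rdiv; lra.
  - exists (2 / r, 0); rewrite <- chord_inf_finite; left; exact (chord_inf_lt r Hr).
Qed.

Lemma sqn3_ge0 (P : R3) : 0 <= sqn3 P.
Proof.
  destruct P as [[a b] t]; simpl.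
  pose proof (Rle_0_sqr a); pose proof (Rle_0_sqr b); pose proof (Rle_0_sqr t).
  unfold Rsqr in *; lra.
Qed.

Lemma sqn3_le (a b t c : R) :
  Rabs a <= c -> Rabs b <= c -> Rabs t <= c -> sqn3 ((a, b), t) <= 3 * (c * c).
Proof.
  intros Ha Hb Ht; simpl.
  assert (Hsq : forall x, Rabs x <= c -> x * x <= c * c).
  { intros x Hx; pose proof (Rabs_pos x).
    replace (x * x) with (Rabs x * Rabs x) by (rewrite <- Rabs_mult; apply Rabs_pos_eq; nra).
    nra. }
  pose proof (Hsq a Ha); pose proof (Hsq b Hb); pose proof (Hsq t Ht); lra.
Qed.

Fixpoint shift_re (h : nat -> affmap) (n : nat) : R :=
  match n with O => 0 | S k => shift_re h k + prodA h k * Re (snd (h (S k))) end.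

Fixpoint shift_im (h : nat -> affmap) (n : nat) : R :=
  match n with O => 0 | S k => shift_im h k + prodA h k * Im (snd (h (S k))) end.

Fixpoint sum_prodA (h : nat -> affmap) (n : nat) : R :=
  match n with O => 0 | S k => sum_prodA h k + prodA h k end.

Lemma Hn_inf (h : nat -> affmap) (n : nat) : Hn h n None = None.
Proof. induction n; simpl; auto. Qed.

Lemma Hn_finite (h : nat -> affmap) (n : nat) (x y : R) :
  Hn h n (Some (x, y)) =
  Some (prodA h n * x + shift_re h n, prodA h n * y + shift_im h n).
Proof.
  revert x y; induction n as [|n IH]; intros x y; simpl.
  - f_equal; f_equal; ring.
  - destruct (h (S n)) as [a [b1 b2]]; simpl; rewrite IH.
    unfold Re, Im; simpl; f_equal; f_equal; ring.
Qed.

Lemma Hn3_finite (h : nat -> affmap) (n : nat) (x y t : R) :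
  Hn3 h n ((x, y), t) =
  ((prodA h n * x + shift_re h n, prodA h n * y + shift_im h n), prodA h n * t).
Proof.
  revert x y t; induction n as [|n IH]; intros x y t; simpl.
  - f_equal; [f_equal|]; ring.
  - destruct (h (S n)) as [a [b1 b2]]; simpl; rewrite IH.
    unfold Re, Im; simpl; f_equal; [f_equal|]; ring.
Qed.

Lemma growing_cv_le_iff (u : nat -> R) (s x : R) : Un_growing u -> Un_cv u s ->
  (forall n, (1 <= n)%nat -> u n <= x) <-> s <= x.
Proof.
  intros Hg Hcv; split.
  - intro Hu. apply Rnot_lt_le; intro Hlt.
    destruct (Hcv (s - x)) as [N HN]; [lra|].
    specialize (HN (S N) ltac:(lia)); unfold R_dist in HN; apply Rabs_def2 in HN.
    pose proof (Hu (S N) ltac:(lia)); lra.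
  - intros Hs n _. pose proof (growing_ineq u s Hg Hcv n); lra.
Qed.

Lemma bounded_not_converges_ideally_inf (h : nat -> affmap) (K : R) :
  (forall n, sqn3 (Hn3 h n jpt) <= K) -> ~ converges_ideally h None.
Proof.
  intros HK Hcv.
  assert (HK0 : 0 <= K) by (pose proof (sqn3_ge0 (Hn3 h 0 jpt)); pose proof (HK 0%nat); lra).
  set (eps := 2 / sqrt (1 + K)).
  assert (Heps : 0 < eps) by (apply Rdiv_lt_0_compat; [lra | apply sqrt_lt_R0; lra]).
  destruct (Hcv eps Heps) as [N HN]; specialize (HN N (le_n N)); simpl in HN.
  set (P := Hn3 h N jpt) in HN.
  pose proof (sqn3_ge0 P); pose proof (HK N).
  assert (eps <= 2 / sqrt (1 + sqn3 P)); [|lra].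
  unfold eps, Rdiv; apply Rmult_le_compat_l; [lra|].
  apply Rinv_le_contravar; [apply sqrt_lt_R0; lra | apply sqrt_le_1_alt; unfold P; lra].
Qed.

Section Composition.

Variable h : nat -> affmap.
Hypothesis a_pos : forall n, (1 <= n)%nat -> 0 < fst (h n).

Lemma prodA_pos (n : nat) : 0 < prodA h n.
Proof.
  induction n; simpl; [lra|].
  apply Rmult_lt_0_compat; [assumption | apply a_pos; lia].
Qed.

Lemma Hn_image_halfplane (n : nat) (w : Chat) :
  (exists v, closed_halfplane 0 v /\ Hn h n v = w) <-> closed_halfplane (shift_re h n) w.
Proof.
  pose proof (prodA_pos n) as HA.
  destruct w as [[x y]|]; simpl.
  - split.
    + intros ([[p q]|] & Hv & E); [|rewrite Hn_inf in E; discriminate].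
      rewrite Hn_finite in E; injection E as Ex _; simpl in Hv; unfold Re; simpl.
      rewrite <- Ex; nra.
    + intro Hx. exists (Some ((x - shift_re h n) / prodA h n, (y - shift_im h n) / prodA h n)).
      split.
      * simpl; unfold Re; simpl; unfold Re in Hx; simpl in Hx.
        apply Rmult_le_pos; [lra | left; apply Rinv_0_lt_compat, HA].
      * rewrite Hn_finite; f_equal; f_equal; field; lra.
  - split; [trivial|]. intros _; exists None; split; [exact I | apply Hn_inf].
Qed.

Lemma limit_set_iff (w : Chat) :
  limit_set h w <-> forall n, (1 <= n)%nat -> closed_halfplane (shift_re h n) w.
Proof.
  unfold limit_set; setoid_rewrite inKbar_iff; setoid_rewrite Hn_image_halfplane.
  reflexivity.
Qed.

Lemma partial_sum_growing : Un_growing (partial_sum h).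
Proof. intro n; pose proof (prodA_pos (S n)); simpl in *; lra. Qed.

Lemma partial_sum_ge0 (n : nat) : 0 <= partial_sum h n.
Proof. induction n; [simpl; lra|]. pose proof (prodA_pos (S n)); simpl in *; lra. Qed.

Lemma sum_prodA_S (n : nat) : sum_prodA h (S n) = 1 + partial_sum h n.
Proof. induction n; simpl in *; [ring | rewrite IHn; ring]. Qed.

Lemma sum_prodA_le (n : nat) : 0 <= sum_prodA h n <= 1 + partial_sum h n.
Proof.
  destruct n; [simpl; lra|]. rewrite sum_prodA_S.
  pose proof (partial_sum_ge0 n); pose proof (partial_sum_growing n); lra.
Qed.

Lemma prodA_le (n : nat) : prodA h n <= 1 + partial_sum h n.
Proof. destruct n; simpl; [lra|]. pose proof (partial_sum_ge0 n); lra. Qed.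

Lemma limit_set_halfplane (s : R) : Un_growing (shift_re h) -> Un_cv (shift_re h) s ->
  forall w, limit_set h w <-> closed_halfplane s w.
Proof.
  intros Hg Hcv [z|]; rewrite limit_set_iff; simpl.
  - exact (growing_cv_le_iff _ _ _ Hg Hcv).
  - split; intros; exact I.
Qed.

Variables m M : R.
Hypothesis m_pos : 0 < m.
Hypothesis re_b_bounds : forall n, (1 <= n)%nat -> m <= Re (snd (h n)) <= M.
Hypothesis im_b_bound : forall n, (1 <= n)%nat -> Rabs (Im (snd (h n))) <= M.

Lemma shift_re_bounds (n : nat) :
  m * sum_prodA h n <= shift_re h n <= M * sum_prodA h n.
Proof.
  induction n as [|n IH]; simpl; [lra|].
  pose proof (prodA_pos n) as HA.
  destruct (re_b_bounds (S n)) as [Hlo Hhi]; [lia|].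
  pose proof (Rmult_le_compat_l _ _ _ (Rlt_le _ _ HA) Hlo).
  pose proof (Rmult_le_compat_l _ _ _ (Rlt_le _ _ HA) Hhi).
  lra.
Qed.

Lemma shift_im_bound (n : nat) : Rabs (shift_im h n) <= M * sum_prodA h n.
Proof.
  induction n as [|n IH]; simpl; [rewrite Rabs_R0; lra|].
  pose proof (prodA_pos n) as HA.
  pose proof (Rmult_le_compat_l _ _ _ (Rlt_le _ _ HA) (im_b_bound (S n) ltac:(lia))).
  pose proof (Rabs_triang (shift_im h n) (prodA h n * Im (snd (h (S n))))).
  rewrite Rabs_mult, (Rabs_pos_eq (prodA h n)) in * by lra.
  lra.
Qed.

Lemma shift_re_growing : Un_growing (shift_re h).
Proof.
  intro n; simpl. pose proof (prodA_pos n).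
  destruct (re_b_bounds (S n)) as [Hlo _]; [lia|].
  pose proof (Rmult_le_pos (prodA h n) (Re (snd (h (S n)))) ltac:(lra) ltac:(lra)); lra.
Qed.

Lemma partial_sum_cv_of_shift_re_bounded (x : R) :
  (forall n, (1 <= n)%nat -> shift_re h n <= x) -> exists l, Un_cv (partial_sum h) l.
Proof.
  intro Hx.
  assert (Hub : has_ub (partial_sum h)).
  { exists (x / m). intros y [n ->].
    destruct (shift_re_bounds (S n)) as [Hlo _]; rewrite sum_prodA_S in Hlo.
    pose proof (Hx (S n) ltac:(lia)).
    apply (Rmult_le_reg_l m); [lra|]. unfold Rdiv; rewrite <- Rmult_assoc,
      (Rmult_comm m x), Rmult_assoc, Rinv_r, Rmult_1_r by lra.
    pose proof (partial_sum_ge0 n); nra. }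
  destruct (growing_cv _ partial_sum_growing Hub) as [l Hl]; exists l; exact Hl.
Qed.

Section Summable.

Variable l : R.
Hypothesis partial_sum_cv : Un_cv (partial_sum h) l.

Let partial_sum_le (n : nat) : partial_sum h n <= l :=
  growing_ineq _ _ partial_sum_growing partial_sum_cv n.

Let M_nonneg : 0 <= M.
Proof. destruct (re_b_bounds 1) as [? ?]; [lia | lra]. Qed.

Lemma shift_re_cv : exists s, Un_cv (shift_re h) s.
Proof.
  assert (Hub : has_ub (shift_re h)).
  { exists (M * (1 + l)). intros y [n ->].
    destruct (shift_re_bounds n) as [_ Hhi].
    pose proof (sum_prodA_le n); pose proof (partial_sum_le n).
    pose proof (Rmult_le_compat_l M (sum_prodA h n) (1 + l) M_nonneg ltac:(lra)); lra. }
  destruct (growing_cv _ shift_re_growing Hub) as [s Hs]; exists s; exact Hs.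
Qed.

Lemma Hn3_jpt_bounded : exists K, forall n, sqn3 (Hn3 h n jpt) <= K.
Proof.
  exists (3 * ((M * (1 + l) + (1 + l)) * (M * (1 + l) + (1 + l)))); intro n.
  unfold jpt; rewrite Hn3_finite, !Rmult_0_r, !Rplus_0_l, Rmult_1_r.
  destruct (shift_re_bounds n) as [Hlo Hhi]; pose proof (shift_im_bound n).
  pose proof (sum_prodA_le n); pose proof (partial_sum_le n).
  pose proof (prodA_pos n); pose proof (prodA_le n).
  pose proof (Rmult_le_compat_l M (sum_prodA h n) (1 + l) M_nonneg ltac:(lra)).
  pose proof (Rmult_le_pos m (sum_prodA h n) ltac:(lra) ltac:(lra)).
  apply sqn3_le; [rewrite Rabs_pos_eq by lra | | rewrite Rabs_pos_eq by lra]; lra.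
Qed.

End Summable.

End Composition.

Lemma admissible_bounds (maps : list affmap) : (forall p, In p maps -> admissible p) ->
  exists m M, 0 < m /\
    forall p, In p maps -> m <= Re (snd p) <= M /\ Rabs (Im (snd p)) <= M.
Proof.
  induction maps as [|a maps IH]; intro Hadm.
  { exists 1, 0; split; [lra | intros p []]. }
  destruct IH as (m & M & Hm & HM); [intros p Hp; apply Hadm; right; exact Hp|].
  destruct (Hadm a (or_introl eq_refl)) as [_ Ha].
  exists (Rmin m (Re (snd a))), (Rmax M (Rmax (Re (snd a)) (Rabs (Im (snd a))))).
  split; [apply Rmin_glb_lt; lra|].
  pose proof (Rmin_l m (Re (snd a))); pose proof (Rmin_r m (Re (snd a))).
  pose proof (Rmax_l M (Rmax (Re (snd a)) (Rabs (Im (snd a))))).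
  pose proof (Rmax_r M (Rmax (Re (snd a)) (Rabs (Im (snd a))))).
  pose proof (Rmax_l (Re (snd a)) (Rabs (Im (snd a)))).
  pose proof (Rmax_r (Re (snd a)) (Rabs (Im (snd a)))).
  intros p [<-|Hp]; [lra|].
  destruct (HM p Hp) as [[? ?] ?]; lra.
Qed.

Theorem lemma3p1 (maps : list affmap) (h : nat -> affmap)
  (Hmaps : forall p, In p maps -> admissible p)
  (Hh : forall n, (1 <= n)%nat -> In (h n) maps) :
  (limit_disc_type h <-> exists l, Un_cv (partial_sum h) l) /\
  (limit_disc_type h -> forall q : Chat, converges_ideally h q -> q <> None).
Proof.
  destruct (admissible_bounds maps Hmaps) as (m & M & Hm & HM).
  assert (a_pos : forall n, (1 <= n)%nat -> 0 < fst (h n))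
    by (intros n Hn; apply (Hmaps _ (Hh n Hn))).
  assert (re_b : forall n, (1 <= n)%nat -> m <= Re (snd (h n)) <= M)
    by (intros n Hn; apply (HM _ (Hh n Hn))).
  assert (im_b : forall n, (1 <= n)%nat -> Rabs (Im (snd (h n))) <= M)
    by (intros n Hn; apply (HM _ (Hh n Hn))).
  assert (Hdisc : limit_disc_type h <-> exists l, Un_cv (partial_sum h) l).
  { split.
    - intros (c & r & Hr & Hc).
      destruct (disc_has_finite_point c r Hr) as [z Hz].
      apply (partial_sum_cv_of_shift_re_bounded h a_pos m M Hm re_b (Re z)).
      exact (proj1 (limit_set_iff h a_pos (Some z)) (proj2 (Hc (Some z)) Hz)).
    - intros [l Hl].
      destruct (shift_re_cv h a_pos m M Hm re_b l Hl) as [s Hs].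
      destruct (closed_halfplane_disc s) as (c & r & Hr & Hc).
      exists c, r; split; [exact Hr|]; intro w.
      pose proof (shift_re_growing h a_pos m M Hm re_b) as Hg.
      rewrite (limit_set_halfplane h a_pos s Hg Hs); apply Hc. }
  split; [exact Hdisc|].
  intros Hd q Hq ->.
  destruct (proj1 Hdisc Hd) as [l Hl].
  destruct (Hn3_jpt_bounded h a_pos m M Hm re_b im_b l Hl) as [K HK].
  exact (bounded_not_converges_ideally_inf h K HK Hq).
Qed.
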